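(* Let $A$ and $B$ be commutative groups. Then $B^A$ is a faithful $\mathbb{Z}_{e(B)}[A]$-module.
   Context: For commutative groups $A,B$, $B^A$ denotes the commutative group (under pointwise addition) of all maps $A\to B$. $\mathbb{Z}_n=\mathbb{Z}/n\mathbb{Z}$ ($\mathbb{Z}_0=\mathbb{Z}$); $e(B)=\exp(B)$ if $B$ has finite exponent and $e(B)=0$ otherwise. The module structure is $(\sum_a n_a[a])f=\sum_a n_a\tau_af$, where $(\tau_af)(x)=f(x+a)$. *)

From HB Require Import structures.
From mathcomp Require Import all_boot all_order all_algebra.
Set Implicit Arguments. Unset Strict Implicit. Unset Printing Implicit Defensive.
Import Order.TTheory GRing.Theory Num.Theory.
Local Open Scope ring_scope.

(* e(B): the exponent of B if B has finite exponent, and 0 otherwise.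
   [is_exponent B e] holds iff e = e(B). *)
Definition is_exponent (B : zmodType) (e : nat) : Prop :=
  ((0 < e)%N /\ (forall b : B, b *+ e = 0) /\
     (forall m : nat, (0 < m)%N -> (forall b : B, b *+ m = 0) -> (e <= m)%N))
  \/ (e = 0%N /\ ~ (exists m : nat, (0 < m)%N /\ forall b : B, b *+ m = 0)).

(* An element of the group ring Z_e[A] is written as a formal finite sum
   sum_i n_i [a_i], represented by the list of pairs (n_i, a_i) with
   integer coefficients (each class in Z_e lifted to Z). *)
Definition grp_elt (A : zmodType) := seq (int * A).

Definition coef (A : zmodType) (r : grp_elt A) (a : A) : int :=
  \sum_(p <- r | p.2 == a) p.1.

Definition zero_in_Ze (A : zmodType) (e : nat) (r : grp_elt A) : Prop :=
  forall a : A, (e%:Z %| coef r a)%Z.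

Definition tau (A B : zmodType) (a : A) (f : A -> B) : A -> B :=
  fun x => f (x + a).

Definition gact (A B : zmodType) (r : grp_elt A) (f : A -> B) : A -> B :=
  fun x => \sum_(p <- r) (tau p.2 f x) *~ p.1.

From HB Require Import structures.
From mathcomp Require Import all_boot all_order all_algebra.
Import Order.TTheory GRing.Theory Num.Theory.
Local Open Scope ring_scope.

(* Acting with r on the function supported at a with value b and evaluating
   at 0 extracts b times the coefficient of [a]; so r kills all of B^A only if
   its coefficients all annihilate B, i.e. are multiples of e(B). *)

Lemma mulrz_eq0_absz (M : zmodType) (x : M) (c : int) :
  (x *~ c == 0) = (x *+ `|c|%N == 0).
Proof. by case: c => n; rewrite ?NegzE ?mulrNz ?oppr_eq0 -pmulrn. Qed.

Lemma exponent_dvdn (B : zmodType) (e m : nat) :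
  is_exponent B e -> (forall b : B, b *+ m = 0) -> (e %| m)%N.
Proof.
case=> [[e_gt0 [eB e_min]] | [-> no_exp]] mB.
- have mod_kills (b : B) : b *+ (m %% e) = 0.
    by have := mB b; rewrite {1}(divn_eq m e) mulrnDr mulnC mulrnA eB mul0rn add0r.
  rewrite /dvdn eqn0Ngt; apply/negP => mod_gt0.
  by have := e_min _ mod_gt0 mod_kills; rewrite leqNgt ltn_pmod.
- rewrite dvd0n eqn0Ngt; apply/negP => m_gt0.
  by apply: no_exp; exists m.
Qed.

Lemma exponent_dvdz (B : zmodType) (e : nat) (c : int) :
  is_exponent B e -> (forall b : B, b *~ c = 0) -> (e%:Z %| c)%Z.
Proof.
move=> eB cB; rewrite dvdzE; apply: exponent_dvdn eB _ => b.
by apply/eqP; rewrite -mulrz_eq0_absz cB.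
Qed.

Lemma gact_indicator0 (A B : zmodType) (r : grp_elt A) (a : A) (b : B) :
  gact r (fun x => if x == a then b else 0) 0 = b *~ coef r a.
Proof.
rewrite /gact /tau /coef; elim: r => [|p r IH]; first by rewrite !big_nil mulr0z.
rewrite !big_cons IH add0r; case: eqP => _; first by rewrite mulrzDr.
by rewrite mul0rz add0r.
Qed.

Theorem lemma3p1 (A B : zmodType) (e : nat) (r : grp_elt A) :
  is_exponent B e ->
  (forall (f : A -> B) (x : A), gact r f x = 0) ->
  zero_in_Ze e r.
Proof.
move=> eB r_kills a; apply: exponent_dvdz eB _ => b.
by rewrite -gact_indicator0 r_kills.
Qed.
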